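(* Let $\gamma\colon I\to\mathbb{R}^2$ be a simple, smooth, closed curve (a smooth embedding of a circle into the plane) whose signed curvature satisfies $|k(s)|<1$ for all $s\in I$. Then the closed region bounded by $\gamma$ is locally drawable and locally closed-disk drawable.
   Context: For a curve parametrized by arc length, with unit normal $n(s)$ obtained by rotating $\gamma'(s)$ by $90^\circ$ counterclockwise, the signed curvature $k(s)$ is defined by $\gamma''(s)=k(s)n(s)$. For $A\subseteq\mathbb{R}^2$ let $N(A)=\{x: |x-a|<1 \text{ for some } a\in A\}$ and $N_{\le}(A)=\{x: |x-a|\le 1 \text{ for some } a\in A\}$. Let $\mathcal{D}_1=\{N(A_1): A_1\subseteq\mathbb{R}^2\}$ and for $n\ge 2$ let $\mathcal{D}_n=\{D\cup N(A_n): D\in\mathcal{D}_{n-1}, A_n\subseteq\mathbb{R}^2\}$ if $n$ is odd and $\mathcal{D}_n=\{D\setminus N(A_n): D\in\mathcal{D}_{n-1}, A_n\subseteq\mathbb{R}^2\}$ if $n$ is even; $\mathcal{D}=\bigcup_n\mathcal{D}_n$ is the collection of drawable sets, and $\mathcal{D}_{\le}$ (closed-disk drawable sets) is defined the same way with $N_{\le}$ in place of $N$. A set $B\subseteq\mathbb{R}^2$ is locally drawable if every $x\in\mathbb{R}^2$ has a neighborhood $U$ such that there is $D\in\mathcal{D}$ with $U\cap B=U\cap D$; locally closed-disk drawable is defined analogously with $D\in\mathcal{D}_{\le}$. *)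

From Stdlib Require Import Reals.
From Coquelicot Require Import Coquelicot.
Open Scope R_scope.

Definition pt := (R * R)%type.
Definition pset := pt -> Prop.

Definition dist2 (x y : pt) : R :=
  sqrt ((fst x - fst y) ^ 2 + (snd x - snd y) ^ 2).

Definition Nbh (A : pset) : pset := fun x => exists a, A a /\ dist2 x a < 1.
Definition Nbh_le (A : pset) : pset := fun x => exists a, A a /\ dist2 x a <= 1.

(* D_0 is empty (unused); D_1 = {N(A_1)};
   D_n = {D u N(A_n)} for n odd, {D \ N(A_n)} for n even (n >= 2). *)
Fixpoint Dn (N : pset -> pset) (n : nat) (D : pset) : Prop :=
  match n with
  | O => False
  | S O => exists A, forall x, D x <-> N A x
  | S m => exists D' A, Dn N m D' /\
      forall x, D x <-> (if Nat.even (S m) then (D' x /\ ~ N A x)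
                         else (D' x \/ N A x))
  end.

Definition drawable (D : pset) : Prop := exists n, Dn Nbh n D.
Definition cdrawable (D : pset) : Prop := exists n, Dn Nbh_le n D.

Definition nbhd (x : pt) (U : pset) : Prop :=
  exists r, 0 < r /\ forall y, dist2 x y < r -> U y.

Definition locally_drawable (B : pset) : Prop :=
  forall x, exists U, nbhd x U /\
    exists D, drawable D /\ forall y, (U y /\ B y) <-> (U y /\ D y).

Definition locally_cdrawable (B : pset) : Prop :=
  forall x, exists U, nbhd x U /\
    exists D, cdrawable D /\ forall y, (U y /\ B y) <-> (U y /\ D y).

Definition image (gx gy : R -> R) : pset :=
  fun p => exists s, p = (gx s, gy s).

Definition path_in_compl (C : pset) (x y : pt) : Prop :=
  exists px py : R -> R,
    (forall t, continuous px t) /\ (forall t, continuous py t) /\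
    (px 0, py 0) = x /\ (px 1, py 1) = y /\
    (forall t, 0 <= t <= 1 -> ~ C (px t, py t)).

(* x lies in a bounded (path-)component of the complement of C.
   For the open set R^2 \ C (C compact), path components = components. *)
Definition in_bounded_component (C : pset) (x : pt) : Prop :=
  ~ C x /\ exists M, forall y, path_in_compl C x y -> fst y ^ 2 + snd y ^ 2 <= M.

Definition closed_region (gx gy : R -> R) : pset :=
  fun p => image gx gy p \/ in_bounded_component (image gx gy) p.

(* Write [n s] for the unit normal.  Since [|k| < 1], for [1 < |t|] close to 1 the squared
   distance from [gamma s + t n s] to [gamma u] is critical at [u = s] and convex in [u] near [s],
   so the open disk of radius [|t|] about this point, and with it the closed unit disk, misses
   the curve near [gamma s].  Near a point of the curve, every point off the curve lies on the
   normal through its nearest curve point, hence in such an open unit disk on its own side; and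
   in a small ball the closed region is constant on each such closed disk, which is convex and
   misses the curve there.  So in that ball the region is the plane minus the union of the
   (open or closed) unit disks that meet the ball outside the region: a drawable set of depth 2.
   Away from the curve a small ball misses it and the region is constant on the ball. *)

From Stdlib Require Import Reals Lra Lia ZArith Classical.
From Coquelicot Require Import Coquelicot.
Open Scope R_scope.

Definition sqdist (a b : pt) : R := (fst a - fst b) ^ 2 + (snd a - snd b) ^ 2.

Lemma sqdist_ge0 a b : 0 <= sqdist a b.
Proof. unfold sqdist; apply Rplus_le_le_0_compat; apply pow2_ge_0. Qed.

Lemma sqdist_pos a b : a <> b -> 0 < sqdist a b.
Proof.
  destruct a as [a1 a2], b as [b1 b2]; unfold sqdist; cbn [fst snd]; intros Hab.
  destruct (Req_dec a1 b1) as [<- | H1].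
  - assert (H2 : a2 - b2 <> 0) by (intros H; apply Hab; f_equal; lra).
    pose proof (pow2_gt_0 _ H2). nra.
  - assert (H1' : a1 - b1 <> 0) by lra.
    pose proof (pow2_gt_0 _ H1'). pose proof (pow2_ge_0 (a2 - b2)). lra.
Qed.

Lemma sqdist_dist2 a b : sqdist a b = dist2 a b ^ 2.
Proof. unfold dist2; rewrite pow2_sqrt; [reflexivity | apply sqdist_ge0]. Qed.

Lemma dist2_ge0 a b : 0 <= dist2 a b.
Proof. apply sqrt_pos. Qed.

Lemma dist2_sym a b : dist2 a b = dist2 b a.
Proof. unfold dist2; f_equal; ring. Qed.

Lemma dist2_refl a : dist2 a a = 0.
Proof. unfold dist2; rewrite <- sqrt_0; f_equal; ring. Qed.

Lemma dist2_le_sqdist a b c d : sqdist a b <= sqdist c d -> dist2 a b <= dist2 c d.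
Proof. apply sqrt_le_1_alt. Qed.

Lemma sqdist_le_dist2 a b r : dist2 a b <= r -> sqdist a b <= r ^ 2.
Proof. intros H; rewrite sqdist_dist2; apply pow_incr; split; [apply dist2_ge0 | exact H]. Qed.

Lemma dist2_triangle a b c : dist2 a c <= dist2 a b + dist2 b c.
Proof.
  destruct a as [a1 a2], b as [b1 b2], c as [c1 c2].
  pose proof (triangle a1 a2 c1 c2 b1 b2) as H.
  unfold dist_euc, Rsqr in H; unfold dist2; cbn [fst snd].
  assert (E : forall x y : R, x ^ 2 + y ^ 2 = x * x + y * y) by (intros; ring).
  rewrite !E. exact H.
Qed.

Definition seg (a b : pt) (l : R) : pt :=
  (fst a + l * (fst b - fst a), snd a + l * (snd b - snd a)).

Lemma dist2_seg_max a b p l : 0 <= l <= 1 ->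
  dist2 (seg a b l) p <= Rmax (dist2 a p) (dist2 b p).
Proof.
  intros Hl. set (M := Rmax (dist2 a p) (dist2 b p)).
  assert (HaM : sqdist a p <= M ^ 2) by (apply sqdist_le_dist2, Rmax_l).
  assert (HbM : sqdist b p <= M ^ 2) by (apply sqdist_le_dist2, Rmax_r).
  assert (HM : 0 <= M) by (eapply Rle_trans; [apply dist2_ge0 | apply Rmax_l]).
  rewrite <- (sqrt_pow2 M HM). apply sqrt_le_1_alt.
  change (sqdist (seg a b l) p <= M ^ 2).
  assert (E : (1 - l) * sqdist a p + l * sqdist b p - sqdist (seg a b l) p
              = l * (1 - l) * sqdist a b) by (unfold sqdist, seg; cbn [fst snd]; ring).
  pose proof (sqdist_ge0 a b).
  assert (0 <= l * (1 - l) * sqdist a b) by (apply Rmult_le_pos; [nra | auto]).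
  assert ((1 - l) * sqdist a p <= (1 - l) * M ^ 2) by (apply Rmult_le_compat_l; lra).
  assert (l * sqdist b p <= l * M ^ 2) by (apply Rmult_le_compat_l; lra).
  lra.
Qed.

(** * Drawable sets of depth two *)

Lemma Nbh_Nbh_le A x : Nbh A x -> Nbh_le A x.
Proof. intros [a [Ha Hd]]; exists a; split; [exact Ha | lra]. Qed.

Definition unit_disk_cover (B U A : pset) : Prop :=
  (forall q, U q -> ~ B q -> Nbh A q) /\
  (forall a q q', A a -> U q -> U q' -> dist2 q a <= 1 -> dist2 q' a <= 1 ->
     B q -> B q').

Section DiskOperator.

Variable N : pset -> pset.
Hypothesis Nbh_sub : forall A x, Nbh A x -> N A x.
Hypothesis sub_Nbh_le : forall A x, N A x -> Nbh_le A x.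

Lemma Dn_complement A : Dn N 2 (fun y => ~ N A y).
Proof.
  exists (N (fun _ => True)), A. split.
  - exists (fun _ => True). tauto.
  - intros y. enough (N (fun _ => True) y) by (cbn; tauto).
    apply Nbh_sub. exists y. split; [exact I | rewrite dist2_refl; lra].
Qed.

(* Remove the disks that meet [U] outside [B]. *)
Lemma unit_disk_cover_Dn B U A : unit_disk_cover B U A ->
  exists D, Dn N 2 D /\ forall y, U y /\ B y <-> U y /\ D y.
Proof.
  intros [Hcov Hconst].
  set (Aout := fun a => A a /\ exists q, U q /\ dist2 q a <= 1 /\ ~ B q).
  exists (fun y => ~ N Aout y). split; [apply Dn_complement |].
  intros y; split; intros [Uy Hy]; split; auto.
  - intros HN. destruct (sub_Nbh_le _ _ HN) as [a [[Aa [q [Uq [Hqa nBq]]]] Hya]].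
    exact (nBq (Hconst a y q Aa Uy Uq Hya Hqa Hy)).
  - apply NNPP. intros nBy. apply Hy, Nbh_sub.
    destruct (Hcov y Uy nBy) as [a [Aa Hya]].
    exists a. split; [split; [exact Aa | exists y; repeat split; auto; lra] | exact Hya].
Qed.

End DiskOperator.

Lemma locally_drawable_of_covers B :
  (forall x, exists U, nbhd x U /\ exists A, unit_disk_cover B U A) ->
  locally_drawable B /\ locally_cdrawable B.
Proof.
  intros Hloc; split; intros x; destruct (Hloc x) as [U [HU [A HA]]];
    exists U; split; auto.
  - destruct (unit_disk_cover_Dn Nbh (fun _ _ H => H) Nbh_Nbh_le B U A HA) as [D [HD HBD]].
    exists D. split; [exists 2%nat; exact HD | exact HBD].
  - destruct (unit_disk_cover_Dn Nbh_le Nbh_Nbh_le (fun _ _ H => H) B U A HA) as [D [HD HBD]].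
    exists D. split; [exists 2%nat; exact HD | exact HBD].
Qed.

(** * Paths in the complement of a set *)

Lemma continuous_affine a b x : continuous (fun t => a + b * t) x.
Proof. apply (@ex_derive_continuous R_AbsRing R_NormedModule). auto_derive. exact I. Qed.

Definition ramp (t : R) : R := (t + Rabs t) / 2.

Lemma continuous_ramp_affine a b x : continuous (fun t => ramp (a + b * t)) x.
Proof.
  apply (continuous_comp (fun t => a + b * t) ramp); [apply continuous_affine |].
  apply continuity_pt_filterlim. unfold ramp.
  apply continuity_pt_mult.
  - apply continuity_pt_plus; [apply continuity_pt_id | apply Rcontinuity_abs].
  - apply continuity_pt_const. intros ? ?; reflexivity.
Qed.

Lemma ramp_nonpos t : t <= 0 -> ramp t = 0.
Proof. intros; unfold ramp; rewrite Rabs_left1 by lra; field. Qed.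

Lemma ramp_nonneg t : 0 <= t -> ramp t = t.
Proof. intros; unfold ramp; rewrite Rabs_right by lra; field. Qed.

Lemma path_concat C x y z :
  path_in_compl C x y -> path_in_compl C y z -> path_in_compl C x z.
Proof.
  intros [px [py [Hpx [Hpy [Hp0 [Hp1 Hp]]]]]] [qx [qy [Hqx [Hqy [Hq0 [Hq1 Hq]]]]]].
  (* [p] run on [0, 1/2], then [q] on [1/2, 1] *)
  set (lo := fun t => 1 + (-2) * t). set (hi := fun t => -1 + 2 * t).
  assert (Hjoin : px 1 = qx 0 /\ py 1 = qy 0) by (rewrite <- Hq0 in Hp1; injection Hp1; auto).
  assert (Hcont : forall (f g : R -> R) c t,
            (forall t, continuous f t) -> (forall t, continuous g t) ->
            continuous (fun t => f (1 - ramp (lo t)) + g (ramp (hi t)) - c) t).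
  { intros f g c t Hf Hg. apply continuity_pt_filterlim.
    apply continuity_pt_minus; [apply continuity_pt_plus | apply continuity_pt_const; now intros].
    - apply continuity_pt_filterlim.
      apply (continuous_comp (fun t => 1 - ramp (lo t)) f); [| apply Hf].
      apply continuity_pt_filterlim, continuity_pt_minus;
        [apply continuity_pt_const; now intros
        | apply continuity_pt_filterlim, continuous_ramp_affine].
    - apply continuity_pt_filterlim.
      apply (continuous_comp (fun t => ramp (hi t)) g); [apply continuous_ramp_affine | apply Hg]. }
  exists (fun t => px (1 - ramp (lo t)) + qx (ramp (hi t)) - px 1),
         (fun t => py (1 - ramp (lo t)) + qy (ramp (hi t)) - py 1).
  split; [intros; apply Hcont; auto |]. split; [intros; apply Hcont; auto |].
  assert (Hfirst : forall t, t <= / 2 -> 1 - ramp (lo t) = 2 * t /\ ramp (hi t) = 0).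
  { intros t Ht; unfold lo, hi; rewrite ramp_nonneg, ramp_nonpos by lra; split; ring. }
  assert (Hsecond : forall t, / 2 <= t -> 1 - ramp (lo t) = 1 /\ ramp (hi t) = 2 * t - 1).
  { intros t Ht; unfold lo, hi; rewrite ramp_nonpos, ramp_nonneg by lra; split; ring. }
  split; [| split].
  - destruct (Hfirst 0 ltac:(lra)) as [-> ->]. rewrite Rmult_0_r, <- Hp0. f_equal; lra.
  - destruct (Hsecond 1 ltac:(lra)) as [-> ->]. rewrite <- Hq1.
    replace (2 * 1 - 1) with 1 by ring. f_equal; ring.
  - intros t Ht. destruct (Rle_dec t (/ 2)) as [H | H].
    + destruct (Hfirst t H) as [-> ->].
      replace (px (2 * t) + qx 0 - px 1) with (px (2 * t)) by lra.
      replace (py (2 * t) + qy 0 - py 1) with (py (2 * t)) by lra.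
      apply Hp; lra.
    + destruct (Hsecond t ltac:(lra)) as [-> ->].
      replace (px 1 + qx (2 * t - 1) - px 1) with (qx (2 * t - 1)) by ring.
      replace (py 1 + qy (2 * t - 1) - py 1) with (qy (2 * t - 1)) by ring.
      apply Hq; lra.
Qed.

Lemma segment_path C a b :
  (forall l, 0 <= l <= 1 -> ~ C (seg a b l)) -> path_in_compl C a b.
Proof.
  intros H. destruct a as [a1 a2], b as [b1 b2].
  exists (fun t => a1 + (b1 - a1) * t), (fun t => a2 + (b2 - a2) * t).
  repeat split; try (intros; apply continuous_affine).
  - f_equal; ring.
  - f_equal; ring.
  - intros t Ht. unfold seg in H; cbn [fst snd] in H.
    rewrite (Rmult_comm (b1 - a1)), (Rmult_comm (b2 - a2)). exact (H t Ht).
Qed.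

Lemma in_bounded_component_path C x y :
  path_in_compl C x y -> in_bounded_component C x -> in_bounded_component C y.
Proof.
  intros Hxy [_ [M HM]]. split.
  - destruct Hxy as [px [py [_ [_ [_ [<- Hp]]]]]]. apply Hp; lra.
  - exists M. intros z Hyz. apply HM. exact (path_concat _ _ _ _ Hxy Hyz).
Qed.

Lemma closed_region_segment gx gy q q' :
  (forall l, 0 <= l <= 1 -> ~ image gx gy (seg q q' l)) ->
  closed_region gx gy q -> closed_region gx gy q'.
Proof.
  intros Hseg [Hq | Hq].
  - exfalso. apply (Hseg 0); [lra |].
    replace (seg q q' 0) with q by (unfold seg; destruct q; cbn; f_equal; ring). exact Hq.
  - right. exact (in_bounded_component_path _ _ _ (segment_path _ _ _ Hseg) Hq).
Qed.

Lemma ex_derive_continuity_pt (f : R -> R) x : ex_derive f x -> continuity_pt f x.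
Proof.
  intros H. apply continuity_pt_filterlim.
  apply (@ex_derive_continuous R_AbsRing R_NormedModule), H.
Qed.

Lemma continuity_pt_eps (f : R -> R) x : continuity_pt f x ->
  forall e, 0 < e -> exists d, 0 < d /\ forall y, Rabs (y - x) < d -> Rabs (f y - f x) < e.
Proof.
  intros H e He. destruct (H e He) as [d [Hd Hy]]. exists d; split; [exact Hd |].
  intros y Hyx. destruct (Req_dec y x) as [-> | Hne].
  - rewrite Rminus_diag, Rabs_R0; exact He.
  - apply (Hy y). split; [split; [exact I | auto] | exact Hyx].
Qed.

Lemma Rabs_dot_unit_le x y a b : x ^ 2 + y ^ 2 = 1 ->
  Rabs (x * a + y * b) <= sqrt (a ^ 2 + b ^ 2).
Proof.
  intros Hxy. rewrite <- sqrt_Rsqr_abs. apply sqrt_le_1_alt. unfold Rsqr.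
  (* Lagrange's identity *)
  assert (E : (x * a + y * b) ^ 2 + (x * b - y * a) ^ 2 = (x ^ 2 + y ^ 2) * (a ^ 2 + b ^ 2))
    by ring.
  rewrite Hxy, Rmult_1_l in E. pose proof (pow2_ge_0 (x * b - y * a)). nra.
Qed.

Lemma le_of_convex_critical (g g1 g2 : R -> R) s s' :
  (forall u, is_derive g u (g1 u)) -> (forall u, is_derive g1 u (g2 u)) -> g1 s = 0 ->
  (forall u, Rmin s s' <= u <= Rmax s s' -> 0 <= g2 u) -> g s <= g s'.
Proof.
  intros Dg Dg1 Hs Hg2.
  assert (Cg : forall u, continuity_pt g u)
    by (intros u; apply ex_derive_continuity_pt; eexists; apply Dg).
  assert (Cg1 : forall u, continuity_pt g1 u)
    by (intros u; apply ex_derive_continuity_pt; eexists; apply Dg1).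
  destruct (MVT_gen g s s' g1) as [xi [Hxi Exi]]; [intros; apply Dg | intros; apply Cg |].
  destruct (MVT_gen g1 s xi g2) as [ze [Hze Eze]]; [intros; apply Dg1 | intros; apply Cg1 |].
  assert (Hsign : 0 <= (xi - s) * (s' - s)).
  { revert Hxi; unfold Rmin, Rmax; destruct (Rle_dec s s'); intros; nra. }
  assert (Hze' : Rmin s s' <= ze <= Rmax s s').
  { revert Hxi Hze; unfold Rmin, Rmax;
      destruct (Rle_dec s s'), (Rle_dec s xi); intros; lra. }
  assert (E : g s' - g s = g2 ze * ((xi - s) * (s' - s))).
  { rewrite Exi. replace (g1 xi) with (g1 xi - g1 s) by (rewrite Hs; ring). rewrite Eze. ring. }
  pose proof (Rmult_le_pos _ _ (Hg2 ze Hze') Hsign). lra.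
Qed.

Lemma exists_shift_into L v a : 0 < L -> exists m : Z, a <= v + IZR m * L < a + L.
Proof.
  intros HL. set (z := (v - a) / L). destruct (archimed z) as [H1 H2].
  exists (1 - up z)%Z. rewrite minus_IZR.
  replace (v + (1 - IZR (up z)) * L) with (a + (z - (IZR (up z) - 1)) * L)
    by (unfold z; field; lra).
  split.
  - assert (0 <= (z - (IZR (up z) - 1)) * L) by (apply Rmult_le_pos; lra). lra.
  - assert ((z - (IZR (up z) - 1)) * L < 1 * L) by (apply Rmult_lt_compat_r; lra). lra.
Qed.

(** * Closed curves of curvature less than one *)

Section Curve.

Variables (gx gy : R -> R) (L : R) (k : R -> R).
Hypothesis L_pos : 0 < L.
Hypothesis periodic : forall s, gx (s + L) = gx s /\ gy (s + L) = gy s.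
Hypothesis smooth : forall n s, ex_derive (Derive_n gx n) s /\ ex_derive (Derive_n gy n) s.
Hypothesis unit_speed : forall s, (Derive gx s) ^ 2 + (Derive gy s) ^ 2 = 1.
Hypothesis injective : forall s t, 0 <= s < L -> 0 <= t < L ->
  gx s = gx t -> gy s = gy t -> s = t.
Hypothesis curvature : forall s,
  Derive_n gx 2 s = k s * (- Derive gy s) /\ Derive_n gy 2 s = k s * Derive gx s.
Hypothesis curvature_lt1 : forall s, Rabs (k s) < 1.

Local Notation dx := (Derive gx).
Local Notation dy := (Derive gy).

Definition gamma s : pt := (gx s, gy s).

Definition offset s t : pt := (gx s - t * dy s, gy s + t * dx s).

Lemma offset_0 s : offset s 0 = gamma s.
Proof. unfold offset, gamma; f_equal; ring. Qed.

Lemma dist2_offset s a b : dist2 (offset s a) (offset s b) = Rabs (a - b).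
Proof.
  unfold dist2, offset; cbn [fst snd]. rewrite <- sqrt_Rsqr_abs. f_equal.
  transitivity ((a - b) ^ 2 * (dx s ^ 2 + dy s ^ 2)); [ring |].
  rewrite unit_speed; unfold Rsqr; ring.
Qed.

Lemma ex_derive_gx s : ex_derive gx s. Proof. exact (proj1 (smooth 0 s)). Qed.
Lemma ex_derive_gy s : ex_derive gy s. Proof. exact (proj2 (smooth 0 s)). Qed.
Lemma ex_derive_dx s : ex_derive dx s. Proof. exact (proj1 (smooth 1 s)). Qed.
Lemma ex_derive_dy s : ex_derive dy s. Proof. exact (proj2 (smooth 1 s)). Qed.

#[local] Hint Resolve ex_derive_gx ex_derive_gy ex_derive_dx ex_derive_dy : core.

Lemma continuity_pt_k s : continuity_pt k s.
Proof.
  apply continuity_pt_ext with (f := fun s => Derive_n gy 2 s * dx s - Derive_n gx 2 s * dy s).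
  { intros u. destruct (curvature u) as [-> ->].
    transitivity (k u * (dx u ^ 2 + dy u ^ 2)); [ring | rewrite unit_speed; ring]. }
  apply continuity_pt_minus; apply continuity_pt_mult; apply ex_derive_continuity_pt;
    solve [auto | apply (smooth 2)].
Qed.

Lemma sqdist_gamma_derive c u : is_derive (fun u => sqdist (gamma u) c) u
  (2 * ((gx u - fst c) * dx u + (gy u - snd c) * dy u)).
Proof.
  unfold sqdist, gamma; cbn [fst snd]. auto_derive; [repeat split; auto |].
  change (fun x => gx x) with gx; change (fun x => gy x) with gy. ring.
Qed.

Lemma sqdist_gamma_second_derive c u :
  is_derive (fun u => 2 * ((gx u - fst c) * dx u + (gy u - snd c) * dy u)) u
    (2 * (1 + k u * ((- dy u) * (gx u - fst c) + dx u * (gy u - snd c)))).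
Proof.
  auto_derive; [repeat split; auto |].
  change (fun x => gx x) with gx; change (fun x => gy x) with gy.
  change (fun x => dx x) with dx; change (fun x => dy x) with dy.
  change (Derive dx u) with (Derive_n gx 2 u); change (Derive dy u) with (Derive_n gy 2 u).
  destruct (curvature u) as [-> ->]. pose proof (unit_speed u). lra.
Qed.

Lemma continuity_pt_sqdist_gamma c u : continuity_pt (fun u => sqdist (gamma u) c) u.
Proof. apply ex_derive_continuity_pt. eexists; apply sqdist_gamma_derive. Qed.

Lemma dist2_gamma_le u v : dist2 (gamma u) (gamma v) <= Rabs (u - v).
Proof.
  set (a := gx u - gx v). set (b := gy u - gy v). set (D := dist2 (gamma u) (gamma v)).
  set (f := fun w => (gx w - gx v) * a + (gy w - gy v) * b).
  destruct (MVT_gen f v u (fun w => dx w * a + dy w * b)) as [c [_ Hc]].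
  - intros w _. unfold f. auto_derive; [repeat split; auto |].
    change (fun x => gx x) with gx; change (fun x => gy x) with gy. ring.
  - intros w _. apply ex_derive_continuity_pt. unfold f. auto_derive. repeat split; auto.
  - assert (HD2 : f u - f v = D ^ 2).
    { unfold D; rewrite <- sqdist_dist2. unfold f, sqdist, gamma, a, b; cbn [fst snd]. ring. }
    assert (Hdot : Rabs (dx c * a + dy c * b) <= D) by (apply Rabs_dot_unit_le, unit_speed).
    assert (HD : 0 <= D) by apply dist2_ge0.
    rewrite Hc in HD2. apply (f_equal Rabs) in HD2.
    rewrite Rabs_mult, (Rabs_right (D ^ 2)) in HD2 by (apply Rle_ge, pow2_ge_0).
    pose proof (Rabs_pos (u - v)). pose proof (Rabs_pos (dx c * a + dy c * b)).
    destruct (Req_dec D 0) as [-> | HD0]; [lra |].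
    assert (D * D <= D * Rabs (u - v)) by nra.
    apply (Rmult_le_reg_l D); lra.
Qed.

Lemma gamma_shift v (m : Z) : gamma (v + IZR m * L) = gamma v.
Proof.
  assert (Hnat : forall n w, gamma (w + INR n * L) = gamma w).
  { induction n as [| n IH]; intros w.
    - f_equal; f_equal; simpl; ring.
    - rewrite S_INR. replace (w + (INR n + 1) * L) with ((w + INR n * L) + L) by ring.
      unfold gamma in *. destruct (periodic (w + INR n * L)) as [-> ->]. apply IH. }
  destruct (Z_le_gt_dec 0 m) as [Hm | Hm].
  - destruct (IZN m Hm) as [n ->]. rewrite <- INR_IZR_INZ. apply Hnat.
  - destruct (IZN (- m) ltac:(lia)) as [n Hn].
    replace m with (- Z.of_nat n)%Z by lia. rewrite opp_IZR, <- INR_IZR_INZ.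
    rewrite <- (Hnat n (v + - INR n * L)). f_equal. ring.
Qed.

Lemma gamma_eq_shift u v : gamma u = gamma v -> exists m : Z, u = v + IZR m * L.
Proof.
  intros E.
  destruct (exists_shift_into L u 0 L_pos) as [mu Hu].
  destruct (exists_shift_into L v 0 L_pos) as [mv Hv].
  rewrite <- (gamma_shift u mu), <- (gamma_shift v mv) in E. injection E as Ex Ey.
  assert (Huv : u + IZR mu * L = v + IZR mv * L) by (apply injective; auto; lra).
  exists (mv - mu)%Z. rewrite minus_IZR. lra.
Qed.

Lemma gamma_neq u v : 0 < Rabs (u - v) < L -> gamma u <> gamma v.
Proof.
  intros Huv E. destruct (gamma_eq_shift u v E) as [m Hm].
  assert (Hm' : 0 < Rabs (IZR m) < 1).
  { rewrite Hm in Huv. replace (v + IZR m * L - v) with (IZR m * L) in Huv by ring.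
    rewrite Rabs_mult, (Rabs_right L) in Huv by lra.
    split; [apply (Rmult_lt_reg_r L) | apply (Rmult_lt_reg_r L)]; lra. }
  rewrite <- abs_IZR in Hm'. destruct Hm' as [H0 H1].
  apply lt_IZR in H0, H1. lia.
Qed.

Lemma gamma_nearest a b c : a <= b ->
  exists m, a <= m <= b /\ forall u, a <= u <= b -> sqdist (gamma m) c <= sqdist (gamma u) c.
Proof.
  intros Hab.
  destruct (continuity_ab_min (fun u => sqdist (gamma u) c) a b Hab) as [m [Hm Hin]].
  - intros; apply continuity_pt_sqdist_gamma.
  - exists m; auto.
Qed.

Lemma gamma_near_param_near s0 eta : 0 < eta -> 2 * eta < L ->
  exists rho, 0 < rho /\ forall v, dist2 (gamma v) (gamma s0) < rho ->
    exists u, Rabs (u - s0) < eta /\ gamma u = gamma v.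
Proof.
  intros Heta HL.
  destruct (gamma_nearest (s0 + eta) (s0 + L - eta) (gamma s0) ltac:(lra)) as [m [Hm Hmin]].
  exists (dist2 (gamma m) (gamma s0)). split.
  - apply sqrt_lt_R0, sqdist_pos, gamma_neq. rewrite Rabs_right; lra.
  - intros v Hv.
    destruct (exists_shift_into L v (s0 + eta - L) L_pos) as [n Hn].
    destruct (Rle_dec (v + IZR n * L) (s0 - eta)) as [Hle | Hgt].
    + exfalso. apply (Rlt_not_le _ _ Hv).
      rewrite <- (gamma_shift v (n + 1)), plus_IZR.
      apply dist2_le_sqdist, Hmin. lra.
    + exists (v + IZR n * L). split; [apply Rabs_def1; lra | apply gamma_shift].
Qed.

Lemma dist_image_pos x : ~ image gx gy x -> exists r, 0 < r /\ forall v, r <= dist2 (gamma v) x.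
Proof.
  intros Hx.
  destruct (gamma_nearest 0 L x ltac:(lra)) as [m [Hm Hmin]].
  exists (dist2 (gamma m) x). split.
  - apply sqrt_lt_R0, sqdist_pos. intros E. apply Hx. exists m. rewrite <- E. reflexivity.
  - intros v. destruct (exists_shift_into L v 0 L_pos) as [n Hn].
    rewrite <- (gamma_shift v n). apply dist2_le_sqdist, Hmin. lra.
Qed.

(* The squared distance to [offset s t] is critical at [s], and its second derivative
   [2 (1 + k <gamma - offset s t, normal>)] stays nonnegative along the arc. *)
Lemma offset_sqdist_ge s s' t :
  (forall u, Rmin s s' <= u <= Rmax s s' -> Rabs (k u) * (Rabs (u - s) + Rabs t) <= 1) ->
  t ^ 2 <= sqdist (gamma s') (offset s t).
Proof.
  intros Hk. set (c := offset s t).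
  replace (t ^ 2) with (sqdist (gamma s) c).
  2:{ rewrite sqdist_dist2, <- offset_0. unfold c. rewrite dist2_offset, pow2_abs. ring. }
  apply (le_of_convex_critical _ _ _ s s' (sqdist_gamma_derive c) (sqdist_gamma_second_derive c)).
  - unfold c, offset; cbn [fst snd]. ring.
  - intros u Hu.
    set (P := (- dy u) * (gx u - fst c) + dx u * (gy u - snd c)).
    assert (HP : Rabs P <= Rabs (u - s) + Rabs t).
    { eapply Rle_trans; [apply Rabs_dot_unit_le; rewrite <- (unit_speed u); ring |].
      change (sqrt _) with (dist2 (gamma u) c).
      eapply Rle_trans; [apply (dist2_triangle _ (gamma s)) |].
      unfold c; rewrite <- (offset_0 s) at 2. rewrite dist2_offset, Rminus_0_l, Rabs_Ropp.
      pose proof (dist2_gamma_le u s). lra. }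
    assert (HkP : Rabs (k u * P) <= 1).
    { rewrite Rabs_mult. eapply Rle_trans; [| apply (Hk u Hu)].
      apply Rmult_le_compat_l; [apply Rabs_pos | exact HP]. }
    pose proof (Rle_abs (- (k u * P))). rewrite Rabs_Ropp in *. lra.
Qed.

Lemma curvature_margin s0 : exists eta T, 0 < eta /\ 2 * eta < L /\ 1 < T <= 2 /\
  forall u, Rabs (u - s0) <= eta -> Rabs (k u) * (2 * eta + T) <= 1.
Proof.
  pose proof (curvature_lt1 s0). pose proof (Rabs_pos (k s0)).
  set (kap := (1 + Rabs (k s0)) / 2).
  destruct (continuity_pt_eps k s0 (continuity_pt_k s0) (kap - Rabs (k s0)) ltac:(unfold kap; lra))
    as [d [Hd Hkd]].
  assert (Hkap : forall u, Rabs (u - s0) < d -> Rabs (k u) <= kap).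
  { intros u Hu. specialize (Hkd u Hu).
    pose proof (Rabs_triang (k u - k s0) (k s0)).
    replace (k u - k s0 + k s0) with (k u) in * by ring. lra. }
  set (m := Rmin (/ kap - 1) 2).
  assert (Hm : 0 < m /\ kap * (1 + m) <= 1).
  { assert (0 < kap < 1) by (unfold kap; lra).
    assert (1 < / kap) by (rewrite <- Rinv_1; apply Rinv_lt_contravar; lra).
    assert (m <= / kap - 1) by apply Rmin_l.
    split; [apply Rmin_pos; lra |].
    replace 1 with (kap * / kap) at 2 by (field; lra). apply Rmult_le_compat_l; lra. }
  set (eta := Rmin (d / 2) (Rmin (m / 4) (L / 4))).
  assert (Heta : 0 < eta) by (unfold eta; repeat apply Rmin_pos; lra).
  assert (Heta1 : eta <= d / 2) by apply Rmin_l.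
  assert (Heta2 : eta <= m / 4) by (eapply Rle_trans; [apply Rmin_r | apply Rmin_l]).
  assert (Heta3 : eta <= L / 4) by (eapply Rle_trans; [apply Rmin_r | apply Rmin_r]).
  assert (m <= 2) by apply Rmin_r.
  exists eta, (1 + m / 2). repeat split; [lra | lra | lra | lra |].
  intros u Hu.
  assert (HkapT : kap * (2 * eta + (1 + m / 2)) <= 1).
  { eapply Rle_trans; [| apply Hm]. apply Rmult_le_compat_l; [unfold kap | ]; lra. }
  eapply Rle_trans; [| exact HkapT].
  apply Rmult_le_compat_r; [lra | apply Hkap; lra].
Qed.

Lemma nearest_point_on_normal q a b u : a < u < b ->
  (forall w, a <= w <= b -> sqdist (gamma u) q <= sqdist (gamma w) q) -> exists d, q = offset u d.
Proof.
  intros Hu Hmin.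
  assert (Hcrit : (gx u - fst q) * dx u + (gy u - snd q) * dy u = 0).
  { pose proof (proj1 (is_derive_Reals _ _ _) (sqdist_gamma_derive q u)) as Hd.
    pose proof (deriv_minimum _ a b u (exist _ _ Hd) (proj1 Hu) (proj2 Hu)) as H0.
    cbn in H0. enough (2 * ((gx u - fst q) * dx u + (gy u - snd q) * dy u) = 0) by lra.
    apply H0. intros; apply Hmin; lra. }
  exists ((- dy u) * (fst q - gx u) + dx u * (snd q - gy u)).
  destruct q as [q1 q2]; unfold offset; cbn [fst snd] in *.
  pose proof (f_equal (Rmult (q1 - gx u)) (unit_speed u)).
  pose proof (f_equal (Rmult (q2 - gy u)) (unit_speed u)).
  pose proof (f_equal (Rmult (dx u)) Hcrit). pose proof (f_equal (Rmult (dy u)) Hcrit).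
  f_equal; lra.
Qed.

Section AtCurvePoint.

Variables s0 eta T rho : R.
Hypothesis eta_pos : 0 < eta.
Hypothesis T_range : 1 < T <= 2.
Hypothesis rho_pos : 0 < rho.
Hypothesis k_margin : forall u, Rabs (u - s0) <= eta -> Rabs (k u) * (2 * eta + T) <= 1.
Hypothesis image_near : forall v, dist2 (gamma v) (gamma s0) < rho ->
  exists u, Rabs (u - s0) < eta /\ gamma u = gamma v.

Definition centres : pset :=
  fun a => exists s t, Rabs (s - s0) <= eta /\ 1 < Rabs t < T /\ a = offset s t.

(* A point at normal distance [d] with [0 < |d| < radius] lies in the open unit disk about the
   centre at height [1 + |d|/2] on its side; this needs [radius <= 2 (T - 1) <= 2]. *)
Definition radius : R := Rmin (rho / 2) (2 * (T - 1)).

Lemma radius_pos : 0 < radius.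
Proof. apply Rmin_pos; lra. Qed.

Lemma radius_le : radius <= rho / 2 /\ radius <= 2 * (T - 1).
Proof. split; [apply Rmin_l | apply Rmin_r]. Qed.

Lemma offset_ball_misses_image s t z : Rabs (s - s0) <= eta -> Rabs t <= T ->
  dist2 z (offset s t) < Rabs t -> dist2 z (gamma s0) < rho -> ~ image gx gy z.
Proof.
  intros Hs Ht Hzc Hz [v ->]. destruct (image_near v Hz) as [u [Hu Euv]].
  assert (Hfar : t ^ 2 <= sqdist (gamma u) (offset s t)).
  { apply offset_sqdist_ge. intros w Hw.
    assert (Hw' : Rabs (w - s0) <= eta /\ Rabs (w - s) <= 2 * eta).
    { revert Hw; apply Rabs_le_between in Hs; apply Rabs_def2 in Hu.
      unfold Rmin, Rmax; destruct (Rle_dec s u); intros; split; apply Rabs_le; lra. }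
    eapply Rle_trans; [| apply (k_margin w), Hw'].
    apply Rmult_le_compat_l; [apply Rabs_pos | lra]. }
  change (gx v, gy v) with (gamma v) in Hzc. rewrite <- Euv in Hzc.
  rewrite sqdist_dist2, <- (pow2_abs t) in Hfar.
  pose proof (dist2_ge0 (gamma u) (offset s t)). nra.
Qed.

Lemma closed_region_const_on_centre_disk a q q' : centres a ->
  dist2 (gamma s0) q < radius -> dist2 (gamma s0) q' < radius ->
  dist2 q a <= 1 -> dist2 q' a <= 1 ->
  closed_region gx gy q -> closed_region gx gy q'.
Proof.
  intros [s [t [Hs [Ht ->]]]] Hq Hq' Hqa Hq'a. apply closed_region_segment.
  intros l Hl. pose proof radius_le.
  apply (offset_ball_misses_image s t); [exact Hs | lra | |].
  - eapply Rle_lt_trans; [apply dist2_seg_max; exact Hl |]. apply Rmax_lub_lt; lra.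
  - eapply Rle_lt_trans; [apply dist2_seg_max; exact Hl |].
    rewrite !(dist2_sym _ (gamma s0)). apply Rmax_lub_lt; lra.
Qed.

Lemma centre_disks_cover q : dist2 (gamma s0) q < radius -> ~ image gx gy q -> Nbh centres q.
Proof.
  intros Hq Hnq. pose proof radius_le.
  destruct (gamma_nearest (s0 - eta) (s0 + eta) q ltac:(lra)) as [m [Hm Hmin]].
  assert (Hmq : dist2 (gamma m) q < radius).
  { eapply Rle_lt_trans; [apply dist2_le_sqdist, (Hmin s0); lra | exact Hq]. }
  destruct (image_near m) as [u [Hu Eum]].
  { eapply Rle_lt_trans; [apply (dist2_triangle _ q) |]. rewrite (dist2_sym q). lra. }
  rewrite <- Eum in Hmin, Hmq.
  destruct (nearest_point_on_normal q (s0 - eta) (s0 + eta) u) as [d ->];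
    [apply Rabs_def2 in Hu; lra | exact Hmin |].
  rewrite <- offset_0, dist2_offset, Rminus_0_l, Rabs_Ropp in Hmq.
  assert (Hd : d <> 0) by (intros ->; apply Hnq; exists u; rewrite offset_0; reflexivity).
  destruct (Rlt_dec 0 d) as [Hpos | Hneg].
  - rewrite Rabs_right in Hmq by lra.
    exists (offset u (1 + d / 2)). split.
    + exists u, (1 + d / 2). rewrite (Rabs_right (1 + d / 2)) by lra. repeat split; lra.
    + rewrite dist2_offset, Rabs_left; lra.
  - rewrite Rabs_left in Hmq by lra.
    exists (offset u (d / 2 - 1)). split.
    + exists u, (d / 2 - 1). rewrite (Rabs_left (d / 2 - 1)) by lra. repeat split; lra.
    + rewrite dist2_offset, Rabs_right; lra.
Qed.

Lemma curve_point_cover : exists U, nbhd (gamma s0) U /\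
  exists A, unit_disk_cover (closed_region gx gy) U A.
Proof.
  exists (fun y => dist2 (gamma s0) y < radius). split.
  { exists radius. split; [apply radius_pos | auto]. }
  exists centres. split.
  - intros q Hq Hnq. apply centre_disks_cover; [exact Hq |]. intros Hi; apply Hnq; left; exact Hi.
  - intros a q q' Ha Hq Hq' Hqa Hq'a. apply (closed_region_const_on_centre_disk a); assumption.
Qed.

End AtCurvePoint.

Lemma off_curve_cover x : ~ image gx gy x -> exists U, nbhd x U /\
  exists A, unit_disk_cover (closed_region gx gy) U A.
Proof.
  intros Hx. destruct (dist_image_pos x Hx) as [r [Hr Hfar]].
  exists (fun y => dist2 x y < r). split; [exists r; split; auto |].
  exists (fun _ => True). split.
  - intros q _ _. exists q. split; [exact I | rewrite dist2_refl; lra].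
  - intros _ q q' _ Hq Hq' _ _. apply closed_region_segment.
    intros l Hl [v Hv].
    assert (Hz : dist2 (seg q q' l) x < r).
    { eapply Rle_lt_trans; [apply dist2_seg_max, Hl |].
      rewrite !(dist2_sym _ x). apply Rmax_lub_lt; assumption. }
    rewrite Hv in Hz. change (gx v, gy v) with (gamma v) in Hz. pose proof (Hfar v). lra.
Qed.

Lemma closed_region_cover x : exists U, nbhd x U /\
  exists A, unit_disk_cover (closed_region gx gy) U A.
Proof.
  destruct (classic (image gx gy x)) as [[s0 ->] | Hx]; [| exact (off_curve_cover x Hx)].
  destruct (curvature_margin s0) as [eta [T [Heta [HL [HT Hk]]]]].
  destruct (gamma_near_param_near s0 eta Heta HL) as [rho [Hrho Hnear]].
  exact (curve_point_cover s0 eta T rho Heta HT Hrho Hk Hnear).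
Qed.

End Curve.

Theorem theorem4p2 (gx gy : R -> R) (L : R) :
  0 < L ->
  (* closed: L-periodic *)
  (forall s, gx (s + L) = gx s /\ gy (s + L) = gy s) ->
  (* smooth: derivatives of all orders exist everywhere *)
  (forall n s, ex_derive (Derive_n gx n) s /\ ex_derive (Derive_n gy n) s) ->
  (* parametrised by arc length *)
  (forall s, (Derive gx s) ^ 2 + (Derive gy s) ^ 2 = 1) ->
  (* simple: injective on one period *)
  (forall s t, 0 <= s < L -> 0 <= t < L ->
     gx s = gx t -> gy s = gy t -> s = t) ->
  (* signed curvature k: gamma'' = k n, n = gamma' rotated by +90 degrees, |k| < 1 *)
  (exists k : R -> R,
     (forall s, Derive_n gx 2 s = k s * (- Derive gy s) /\
                Derive_n gy 2 s = k s * Derive gx s) /\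
     (forall s, Rabs (k s) < 1)) ->
  locally_drawable (closed_region gx gy) /\
  locally_cdrawable (closed_region gx gy).
Proof.
  intros HL Hper Hsmooth Hunit Hinj [k [Hk Hk1]].
  apply locally_drawable_of_covers. intros x.
  exact (closed_region_cover gx gy L k HL Hper Hsmooth Hunit Hinj Hk Hk1 x).
Qed.
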